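(* Let $s\ge 0$, $t\ge 1$, and let $G=K_s\vee K_{2*t}$. Let $A$ be a clique of size $s+t$ in $G$ and let $B=V(G)\setminus A$. If $f:V(G)\to\mathbb{Z}^+$ satisfies $f(v)\ge s+t$ for all $v\in A$ and $f(v)\ge t$ for all $v\in B$, then $G$ is $f$-AT.
   Context: $K_{2*t}$ is the complete multipartite graph with $t$ parts of size $2$; $G_1\vee G_2$ (the join) is the disjoint union of $G_1$ and $G_2$ together with all edges between them. For a graph $G$ and $f:V(G)\to\mathbb{Z}^+$, an orientation $D$ of $E(G)$ is an Alon--Tarsi orientation for $f$ if $d^+_D(v)<f(v)$ for every vertex $v$ and the number of spanning Eulerian subgraphs of $D$ (spanning subdigraphs in which every vertex has equal in- and out-degree) with an even number of edges differs from the number with an odd number of edges; $G$ is $f$-AT if such an orientation exists. *)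

From HB Require Import structures.
From mathcomp Require Import all_boot.
Set Implicit Arguments. Unset Strict Implicit. Unset Printing Implicit Defensive.

Section AT.
Variable V : finType.

(* A simple graph on V is a symmetric irreflexive relation e. *)
Definition is_orientation (e D : rel V) : Prop :=
  forall x y, (D x y -> e x y) /\ (e x y -> D x y != D y x).

Definition arcs (D : rel V) : {set V * V} := [set a | D a.1 a.2].

Definition outdeg (D : rel V) (v : V) : nat := #|[set y | D v y]|.

Definition eulerian_sub (D : rel V) (H : {set V * V}) : bool :=
  (H \subset arcs D) &&
  [forall v, #|[set a in H | a.1 == v]| == #|[set a in H | a.2 == v]|].

Definition n_even_eulerian (D : rel V) : nat :=
  #|[set H : {set V * V} | eulerian_sub D H & ~~ odd #|H|]|.
Definition n_odd_eulerian (D : rel V) : nat :=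
  #|[set H : {set V * V} | eulerian_sub D H & odd #|H|]|.

Definition AT_orientation (e : rel V) (f : V -> nat) (D : rel V) : Prop :=
  is_orientation e D /\ (forall v, outdeg D v < f v) /\
  n_even_eulerian D <> n_odd_eulerian D.

Definition is_fAT (e : rel V) (f : V -> nat) : Prop :=
  exists D : rel V, AT_orientation e f D.

Definition is_clique (e : rel V) (A : {set V}) : Prop :=
  forall x y, x \in A -> y \in A -> x != y -> e x y.

End AT.

(* G = K_s \vee K_{2*t}: vertices inl i (i < s) of K_s, and inr (i, b) for
   the two vertices (b = false/true) of part i < t of K_{2*t}. *)
Definition JV (s t : nat) : finType := ('I_s + ('I_t * bool))%type.

Definition Jadj (s t : nat) : rel (JV s t) := fun x y =>
  match x, y with
  | inl i, inl j => i != j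
  | inl _, inr _ => true
  | inr _, inl _ => true
  | inr p, inr q => p.1 != q.1
  end.

(* Orient G so that each vertex v has out-degree m v - 1, where the list size m v is
   s + t on the vertices of A inside K_{2*t}, t on B, and t + j + 1 <= s + t on the j-th
   vertex of K_s.  By the coefficient formula of the Combinatorial Nullstellensatz, the
   difference between the numbers of even and odd spanning Eulerian subdigraphs is a
   weighted sum of the graph polynomial over the colourings y with y v < m v.  A nonzero
   term needs a proper colouring, and the bounds force it: A receives all colours below
   s + t, each vertex of B shares the colour of its partner in A, which is below t, and
   the j-th vertex of K_s gets colour t + j.  Such colourings differ only by a permutation
   of the parts of K_{2*t}, which leaves the term unchanged, so the sum is a positive
   multiple of one nonzero term. *)

From HB Require Import structures.
From mathcomp Require Import all_boot all_order all_algebra zify.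

Set Implicit Arguments. Unset Strict Implicit. Unset Printing Implicit Defensive.
Import Order.TTheory GRing.Theory Num.Theory.
Local Open Scope ring_scope.

Lemma card_set_sum (T : finType) (P : pred T) :
  #|[set a | P a]| = (\sum_a (P a : nat))%N.
Proof.
by rewrite -sum1_card big_mkcond /=; apply: eq_bigr => a _; rewrite inE; case: (P a).
Qed.

Lemma sum_eq_exists_ltn (T : finType) (F G : T -> nat) v :
  (\sum_w F w = \sum_w G w)%N -> F v != G v -> exists w, (F w < G w)%N.
Proof.
move=> eqFG neFG; case: (boolP [exists w, F w < G w]%N) => [/existsP //|/existsPn geFG].
have leGF w : (G w <= F w)%N by rewrite leqNgt geFG.
have ltGF : (G v < F v)%N by rewrite ltn_neqAle eq_sym neFG leGF.
have : (\sum_(w | w != v) G w <= \sum_(w | w != v) F w)%N by apply: leq_sum.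
by move: eqFG; rewrite (bigD1 v) //= [X in _ = X](bigD1 v) //=; lia.
Qed.

Lemma big_pairE (R : Type) (idx : R) (op : Monoid.com_law idx) (I J : finType)
  (F : I * J -> R) : \big[op/idx]_p F p = \big[op/idx]_i \big[op/idx]_j F (i, j).
Proof. by rewrite pair_big; apply: eq_bigr => -[]. Qed.

Lemma sum_neq0_const_support (R : numDomainType) (I : finType) (F : I -> R) i0 :
  (forall i, F i != 0 -> F i = F i0) -> F i0 != 0 -> \sum_i F i != 0.
Proof.
move=> F_const F_i0; rewrite (eq_bigr (fun i => (F i != 0)%:R * F i0)); last first.
  by move=> i _; case: (eqVneq (F i) 0) => [->|/F_const ->]; rewrite ?mul0r ?mul1r.
by rewrite -mulr_suml -natr_sum mulf_neq0 // pnatr_eq0 -lt0n (bigD1 i0) //= F_i0.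
Qed.

Lemma inj_bounded_onto (T : finType) (A : {set T}) (y : T -> nat) :
  {in A &, injective y} -> {in A, forall u, y u < #|A|}%N ->
  forall c, (c < #|A|)%N -> exists2 u, u \in A & y u = c.
Proof.
move=> y_inj y_lt.
have uniq_yA : uniq (map y (enum A)).
  by rewrite map_inj_in_uniq ?enum_uniq // => u w; rewrite !mem_enum; apply: y_inj.
have yA_sub : {subset map y (enum A) <= iota 0 #|A|}.
  by move=> c /mapP[u uA ->]; rewrite mem_iota add0n y_lt // -mem_enum.
have size_yA : (size (iota 0 #|A|) <= size (map y (enum A)))%N.
  by rewrite size_iota size_map -cardE.
have [_ eq_yA] := uniq_min_size uniq_yA yA_sub size_yA.
move=> c lt_c; have : c \in map y (enum A) by rewrite eq_yA mem_iota.
by case/mapP => u; rewrite mem_enum => uA ->; exists u.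
Qed.

Lemma ord_inj_bounded_id n (g : 'I_n -> nat) :
  injective g -> (forall j, g j <= j)%N -> forall j, g j = j.
Proof.
move=> g_inj g_le; suff gE k (j : 'I_n) : j = k :> nat -> g j = j by move=> j; apply: gE.
elim/ltn_ind: k j => k IH j jk; have := g_le j; rewrite leq_eqVlt => /orP[/eqP //|lt_gj].
have lt_gn : (g j < n)%N by apply: ltn_trans lt_gj (ltn_ord j).
have lt_gk : (g j < k)%N by rewrite -jk.
have /g_inj/(congr1 val) /= gjE := IH _ lt_gk (Ordinal lt_gn) erefl.
by rewrite gjE ltnn in lt_gj.
Qed.

Section Lagrange.
Variable R : numFieldType.

Definition lagrange_denom (m c : nat) : R := \prod_(k < m | (k : nat) != c) (c%:R - k%:R).

Definition node_weight (m c : nat) : R := if (c < m)%N then (lagrange_denom m c)^-1 else 0.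

Lemma node_weight_eq0 m c : (node_weight m c == 0) = (m <= c)%N.
Proof.
rewrite /node_weight; case: ltnP => _; rewrite ?eqxx // invr_eq0.
by apply/negbTE/prodf_neq0 => k neq_kc; rewrite subr_eq0 eqr_nat eq_sym.
Qed.

Lemma natr_inj : injective (fun n : nat => (n%:R : R)).
Proof. by move=> a b /eqP; rewrite eqr_nat => /eqP. Qed.

(* Both sides are the coefficient of X^(m-1) in the Lagrange interpolation of X^e
   on the nodes 0, ..., m-1. *)
Lemma lagrange_power_sum (m e : nat) : (0 < m)%N -> (e <= m.-1)%N ->
  \sum_(c < m) (c%:R : R) ^+ e * (lagrange_denom m c)^-1 = (e == m.-1)%:R.
Proof.
move=> m_gt0 le_em.
have size_Xe : (size ('X^e : {poly R}) <= m)%N by rewrite size_polyXn; case: m m_gt0 le_em.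
have := congr1 (fun p : {poly R} => p`_(m.-1)) (lagrange_gen m_gt0 natr_inj size_Xe).
rewrite /= coefXn eq_sym => ->; rewrite coef_sum; apply: eq_bigr => i _.
rewrite (lagrangeE m_gt0 natr_inj) /= mulrA -polyCM coefCM hornerXn.
set p := \prod_(j < m | j != i) _.
have -> : p`_m.-1 = 1.
  have p_monic : p \is monic by rewrite /p -big_filter; apply: monic_prod_XsubC.
  have size_p : size p = m.
    rewrite /p -big_filter size_prod_XsubC size_filter.
    have := cardC1 i; rewrite card_ord /= cardE /enum_mem -enumT /= size_filter.
    by rewrite /index_enum unlock enumT => ->; case: m i {p p_monic m_gt0 le_em size_Xe} => [[]|].
  by move/monicP: p_monic; rewrite /lead_coef size_p.
rewrite mulr1 /p horner_prod /lagrange_denom; congr (_ * _^-1).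
by apply: eq_bigr => j _; rewrite hornerXsubC.
Qed.

End Lagrange.

Section CoefficientFormula.
Variables (R : numFieldType) (V : finType) (D : rel V).

Definition graph_poly (y : V -> R) : R := \prod_(a : V * V | D a.1 a.2) (y a.1 - y a.2).

(* Expanding the graph polynomial, the arcs in S contribute [- y a.2], the others [y a.1]. *)
Definition arc_end (S : {set V * V}) (a : V * V) : V := if a \in S then a.2 else a.1.

Definition end_deg (S : {set V * V}) (v : V) : nat :=
  #|[set a : V * V | D a.1 a.2 && (arc_end S a == v)]|.

Lemma graph_polyE y : graph_poly y = \sum_(S : {set V * V})
  (if S \subset arcs D then (-1) ^+ #|S| * \prod_v y v ^+ end_deg S v else 0).
Proof.
pose F (a : V * V) := if D a.1 a.2 then - y a.2 else 0.
pose G (a : V * V) := if D a.1 a.2 then y a.1 else 1.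
rewrite /graph_poly big_mkcond /=.
transitivity (\prod_(a : V * V) (F a + G a)).
  by apply: eq_bigr => a _; rewrite /F /G; case: (D _ _); rewrite ?add0r // addrC.
rewrite bigA_distr; apply: eq_bigr => S _.
case: (boolP (S \subset arcs D)) => [/subsetP SD | /subsetPn[a aS]]; last first.
  by rewrite inE => nDa; rewrite (bigD1 a) //= /F /G (negbTE nDa) aS mul0r.
transitivity (\prod_a ((if a \in S then -1 else 1) *
                       (if D a.1 a.2 then y (arc_end S a) else 1))).
  apply: eq_bigr => a _; rewrite /F /G /arc_end.
  case: (boolP (a \in S)) => [aS|_]; last by rewrite mul1r.
  by move/SD: aS; rewrite inE => ->; rewrite mulN1r.
rewrite big_split /= -!big_mkcond /= prodr_const; congr (_ * _).
rewrite (partition_big (arc_end S) predT) //=; apply: eq_bigr => v _.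
rewrite (eq_bigr (fun _ => y v)); last by move=> a /andP[_ /eqP ->].
by rewrite prodr_const; congr (_ ^+ _); apply: eq_card => a; rewrite inE.
Qed.

Lemma graph_poly_pair y : graph_poly y = \prod_u \prod_(w | D u w) (y u - y w).
Proof. by rewrite /graph_poly pair_big_dep. Qed.

Definition grid_sum (K : nat) (m : V -> nat) : R :=
  \sum_(y : {ffun V -> 'I_K}) graph_poly (fun v => (y v)%:R) * \prod_v node_weight R (m v) (y v).

Definition power_sum (K m e : nat) : R := \sum_(c : 'I_K) (c%:R : R) ^+ e * node_weight R m c.

Lemma grid_sumE K m : grid_sum K m = \sum_(S : {set V * V})
  (if S \subset arcs D then (-1) ^+ #|S| * \prod_v power_sum K (m v) (end_deg S v) else 0).
Proof.
rewrite /grid_sum; under eq_bigr do rewrite graph_polyE big_distrl /=.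
rewrite exchange_big /=; apply: eq_bigr => S _.
case: ifP => _; last by rewrite big1 // => y _; rewrite mul0r.
under eq_bigr do rewrite -mulrA -big_split /=.
by rewrite -mulr_sumr (bigA_distr_bigA (fun v (c : 'I_K) => _)).
Qed.

Lemma power_sum_low K m e : (0 < m <= K)%N -> (e <= m.-1)%N ->
  power_sum K m e = (e == m.-1)%:R.
Proof.
case/andP=> m_gt0 le_mK le_em; rewrite -lagrange_power_sum //.
rewrite (big_ord_widen K (fun c : nat => (c%:R : R) ^+ e * (lagrange_denom R m c)^-1) le_mK).
rewrite big_mkcond /=.
by apply: eq_bigr => c _; rewrite /node_weight; case: ifP; rewrite ?mulr0.
Qed.

Lemma sum_card_arcs_fibres (h : V * V -> V) :
  (\sum_v #|[set a : V * V | D a.1 a.2 && (h a == v)]| = #|[set a : V * V | D a.1 a.2]|)%N.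
Proof.
rewrite card_set_sum; under eq_bigr do rewrite card_set_sum.
rewrite exchange_big /=; apply: eq_bigr => a _.
rewrite (bigD1 (h a)) //= eqxx andbT big1 ?addn0 // => v /negbTE hav.
by rewrite eq_sym hav andbF.
Qed.

Lemma outdegE v : outdeg D v = #|[set a : V * V | D a.1 a.2 && (a.1 == v)]|.
Proof.
rewrite /outdeg !card_set_sum -(pair_big xpredT xpredT (fun u w => (D u w && (u == v) : nat))).
rewrite [RHS](bigD1 v) //= [X in (_ + X)%N]big1 ?addn0; last first.
  by move=> u /negbTE nuv; apply: big1 => w _; rewrite nuv andbF.
by apply: eq_bigr => w _; rewrite eqxx andbT.
Qed.

Lemma sum_end_deg (S : {set V * V}) : (\sum_v end_deg S v = \sum_v outdeg D v)%N.
Proof.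
rewrite /end_deg sum_card_arcs_fibres; under [RHS]eq_bigr do rewrite outdegE.
by rewrite (sum_card_arcs_fibres fst).
Qed.

Definition balanced (S : {set V * V}) : bool :=
  [forall v, #|[set a in S | a.1 == v]| == #|[set a in S | a.2 == v]|].

(* Both degrees count the arcs of D leaving v outside S; the remaining terms are
   the in- and out-degree of v in S. *)
Lemma end_deg_eq_outdeg (S : {set V * V}) v : S \subset arcs D ->
  (end_deg S v == outdeg D v) = (#|[set a in S | a.1 == v]| == #|[set a in S | a.2 == v]|).
Proof.
move=> /subsetP SD; rewrite outdegE /end_deg !card_set_sum.
pose X := (\sum_a (D a.1 a.2 && (a \notin S) && (a.1 == v) : nat))%N.
have SDa a : (a \in S) ==> D a.1 a.2 by apply/implyP => /SD; rewrite inE.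
have -> : (\sum_a (D a.1 a.2 && (arc_end S a == v) : nat) =
           X + \sum_a ((a \in S) && (a.2 == v) : nat))%N.
  rewrite -big_split /=; apply: eq_bigr => a _; rewrite /arc_end.
  by move: (SDa a); case: (a \in S); case: (D _ _); rewrite //= addn0.
have -> : (\sum_a (D a.1 a.2 && (a.1 == v) : nat) =
           X + \sum_a ((a \in S) && (a.1 == v) : nat))%N.
  rewrite -big_split /=; apply: eq_bigr => a _.
  by move: (SDa a); case: (a \in S); case: (D _ _); rewrite //= addn0.
by rewrite eqn_add2l eq_sym.
Qed.

Lemma prod_power_sum K m (S : {set V * V}) : (forall v, 0 < m v <= K)%N ->
  (forall v, outdeg D v = (m v).-1) -> S \subset arcs D ->
  \prod_v power_sum K (m v) (end_deg S v) = (balanced S)%:R.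
Proof.
move=> m_bnd outdeg_m SD.
have low v : (end_deg S v <= (m v).-1)%N -> power_sum K (m v) (end_deg S v) =
                                            (end_deg S v == outdeg D v)%:R.
  by move=> le_v; rewrite power_sum_low // outdeg_m.
case: (boolP (balanced S)) => [/forallP balS | /forallPn[v]].
  apply: big1 => v _; have := balS v; rewrite -end_deg_eq_outdeg // => /eqP e.
  by rewrite low e ?outdeg_m ?eqxx.
rewrite -end_deg_eq_outdeg // => /(sum_eq_exists_ltn (sum_end_deg S))[w lt_w].
by rewrite (bigD1 w) //= low ?(ltn_eqF lt_w) ?mul0r // -outdeg_m ltnW.
Qed.

Theorem grid_sum_eulerian K m : (forall v, 0 < m v <= K)%N ->
  (forall v, outdeg D v = (m v).-1) ->
  grid_sum K m = (n_even_eulerian D)%:R - (n_odd_eulerian D)%:R.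
Proof.
move=> m_bnd outdeg_m.
rewrite grid_sumE /n_even_eulerian /n_odd_eulerian !card_set_sum !natr_sum -sumrB.
apply: eq_bigr => S _; rewrite /eulerian_sub -/(balanced S).
case: (boolP (S \subset arcs D)) => SD /=; last by rewrite subrr.
rewrite prod_power_sum //; case: (balanced S); last by rewrite mulr0 subrr.
by rewrite mulr1 -signr_odd; case: (odd #|S|); rewrite ?subr0 ?sub0r.
Qed.

End CoefficientFormula.

Lemma is_fAT_grid_sum (V : finType) (e D : rel V) (f m : V -> nat) (K : nat) :
  is_orientation e D -> (forall v, 0 < m v <= K)%N ->
  (forall v, outdeg D v = (m v).-1) -> (forall v, m v <= f v)%N ->
  grid_sum rat D K m != 0 -> is_fAT e f.
Proof.
move=> orD m_bnd outdeg_m le_mf grid_neq0; exists D; split=> //; split.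
  move=> v; rewrite outdeg_m; apply: leq_trans (le_mf v).
  by case/andP: (m_bnd v) => /prednK ->.
move=> even_odd; move: grid_neq0.
by rewrite (grid_sum_eulerian _ m_bnd outdeg_m) even_odd subrr eqxx.
Qed.

Lemma orientation_adj (V : finType) (e D : rel V) u w :
  is_orientation e D -> e u w -> D u w || D w u.
Proof. by move=> /(_ u w)[_ /[apply]]; case: (D u w); case: (D w u). Qed.

Lemma graph_poly_neq0P (R : numFieldType) (V : finType) (e D : rel V) (y : V -> R) :
  is_orientation e D -> reflect (forall u w, e u w -> y u != y w) (graph_poly D y != 0).
Proof.
move=> orD; apply: (iffP (prodf_neq0 _ _)) => [arc_neq u w euw | proper [u w] Duw].
  have arc_neq' u' w' : D u' w' -> y u' != y w'.
    by move=> Du'w'; rewrite -subr_eq0 (arc_neq (u', w')).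
  by case/orP: (orientation_adj orD euw) => /arc_neq' //; rewrite eq_sym.
by rewrite subr_eq0 proper //; case: (orD u w) => /(_ Duw).
Qed.

Section Join.
Variables (s t : nat) (A : {set JV s t}).
Hypotheses (cardA : #|A| = (s + t)%N) (cliqueA : is_clique (@Jadj s t) A).

Definition part (x : JV s t) : 'I_s + 'I_t :=
  match x with inl j => inl j | inr p => inr p.1 end.

Lemma part_inj : {in A &, injective part}.
Proof.
move=> [j|[i b]] [k|[l c]] //= xA yA; first by case=> ->.
case=> eil; subst l; case: (eqVneq b c) => [-> //|neq_bc].
have := cliqueA xA yA; rewrite /Jadj /= eqxx => adj; suff : false by [].
by apply: adj; apply: contra_neq neq_bc; case.
Qed.

Lemma part_onto z : exists2 x, x \in A & part x = z.
Proof.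
have /eqP partA : part @: A == setT.
  rewrite eqEcard subsetT /= cardsT card_in_imset; last exact: part_inj.
  by rewrite card_sum !card_ord cardA.
have /imsetP[x xA ->] : z \in part @: A by rewrite partA inE.
by exists x.
Qed.

Lemma inl_in_A j : inl j \in A.
Proof. by have [[k|p] xA //= [<-]] := part_onto (inl j). Qed.

Definition side (i : 'I_t) : bool := inr (i, true) \in A.

Lemma inr_in_A i b : (inr (i, b) \in A) = (b == side i).
Proof.
have [[k|[l c]] //= cA [eli]] := part_onto (inr i); subst l.
have in_A_c b' : inr (i, b') \in A -> b' = c by move=> bA; case: (part_inj bA cA erefl).
have side_c : side i = c.
  rewrite /side; case: c cA in_A_c => [-> //|cA in_A_c].
  by apply/negbTE/negP => /in_A_c.
by rewrite side_c; apply/idP/eqP => [/in_A_c|->].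
Qed.

(* Between parts k < i of K_{2*t}, the arcs from i to k join vertices on the same side of
   A and the arcs from k to i vertices on opposite sides, so every vertex of K_{2*t} has
   out-degree t - 1 inside K_{2*t}. *)
Definition ori : rel (JV s t) := fun x y =>
  match x, y with
  | inl j, inl k => (k < j)%N
  | inl _, inr _ => y \notin A
  | inr _, inl _ => x \in A
  | inr p, inr q => (p.1 != q.1) &&
      (if (q.1 < p.1)%N then (x \in A) == (y \in A) else (x \in A) != (y \in A))
  end.

Definition list_size (x : JV s t) : nat :=
  match x with inl j => (t + j).+1 | inr _ => if x \in A then (s + t)%N else t end.

Lemma ori_orientation : is_orientation (@Jadj s t) ori.
Proof.
move=> [j|[i b]] [k|[l c]]; rewrite /ori /Jadj /=; split=> //.
- by move=> lt_kj; rewrite neq_ltn lt_kj orbT.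
- by move=> neq_jk; case: ltngtP => // /val_inj eq_jk; rewrite eq_jk eqxx in neq_jk.
- by move=> _; case: (_ \in A).
- by move=> _; case: (_ \in A).
- by case/andP.
- move=> neq_il; have neq_li : l != i by rewrite eq_sym.
  rewrite neq_il neq_li /=.
  case: ltngtP => [_|_|/val_inj eq_il]; try by case: (_ \in A); case: (_ \in A).
  by rewrite eq_il eqxx in neq_il.
Qed.

Lemma outdeg_ori v : outdeg ori v = (list_size v).-1.
Proof.
have sum_side (F : bool -> nat) i : (\sum_b F (inr (i, b) \in A) = F true + F false)%N.
  by rewrite big_bool !inr_in_A /=; case: (side i); rewrite //= addnC.
rewrite /outdeg card_set_sum big_sumType /= big_pairE.
case: v => [j|[i b]] /=.
- have -> : (\sum_(k < s) ((k < j)%N : nat) = j)%N.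
    rewrite -big_mkcond /= (big_ord_narrow (ltnW (ltn_ord j))).
    by rewrite sum1_card card_ord.
  under eq_bigr do rewrite (sum_side (fun c => ~~ c)) /=.
  by rewrite sum1_card card_ord addnC.
- rewrite sum_nat_const card_ord.
  under eq_bigr => k _ do rewrite (sum_side (fun c => (i != k) &&
      (if (k < i)%N then (inr (i, b) \in A) == c else (inr (i, b) \in A) != c))) /=.
  rewrite (eq_bigr (fun k => ((i != k) : nat))); last first.
    by move=> k _; case: (i != k); case: (k < i)%N; case: (_ \in A).
  rewrite -card_set_sum.
  have -> : [set k | i != k] = [set~ i] by apply/setP => k; rewrite !inE eq_sym.
  by rewrite cardsC1 card_ord; have := ltn_ord i; case: (_ \in A) => /=; lia.
Qed.

Lemma list_size_bounds v : (0 < list_size v <= s + t)%N.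
Proof.
case: v => [j|[i b]] /=; first by rewrite [(s + t)%N]addnC ltn_add2l ltn_ord.
have t_gt0 : (0 < t)%N by apply: leq_ltn_trans (ltn_ord i).
by case: (_ \in A); rewrite ?addn_gt0 t_gt0 ?orbT ?leqnn ?leq_addl.
Qed.

Definition colouring (z : 'I_t -> nat) (v : JV s t) : nat :=
  match v with inl j => (t + j)%N | inr p => z p.1 end.

Local Notation nat_rat n := (n%:R : rat).

Definition between_parts (z : 'I_t -> nat) (i k : 'I_t) : rat :=
  if i == k then 1 else (nat_rat (z i) - nat_rat (z k)) ^+ 2.

(* The value of the graph polynomial at [colouring z], in a form that is visibly invariant
   under permuting the parts of K_{2*t}. *)
Definition colouring_poly (z : 'I_t -> nat) : rat :=
  (\prod_(j : 'I_s) ((\prod_(k : 'I_s | (k < j)%N) (nat_rat (t + j) - nat_rat (t + k)))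
      * \prod_i (nat_rat (t + j) - nat_rat (z i))))
  * \prod_i ((\prod_(k : 'I_s) (nat_rat (z i) - nat_rat (t + k))) * \prod_k between_parts z i k).

Lemma prod_arcs_between_parts (z : 'I_t -> nat) i k :
  \prod_b \prod_c (if ori (inr (i, b)) (inr (k, c)) then nat_rat (z i) - nat_rat (z k) else 1)
  = between_parts z i k.
Proof.
rewrite /between_parts !big_bool /ori /= !inr_in_A.
case: (eqVneq i k) => [<-|neq_ik] /=; first by rewrite !mulr1.
by case: (k < i)%N; case: (side i); case: (side k); rewrite /= ?mulr1 ?mul1r expr2.
Qed.

Lemma graph_poly_colouring z : graph_poly ori (fun v => nat_rat (colouring z v)) = colouring_poly z.
Proof.
have prod_side (X : rat) i (P : bool -> bool) : (P true != P false) ->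
  \prod_b (if P (inr (i, b) \in A) then X else 1) = X.
  by rewrite big_bool !inr_in_A; case: (side i); case: (P true); case: (P false);
     rewrite /= ?mulr1 ?mul1r.
rewrite graph_poly_pair big_sumType /=; congr (_ * _).
  apply: eq_bigr => j _; rewrite big_sumType /=; congr (_ * _).
  rewrite big_mkcond big_pairE; apply: eq_bigr => i _ /=.
  by rewrite (prod_side _ _ negb).
rewrite big_pairE; apply: eq_bigr => i _.
under eq_bigr do rewrite big_sumType /=.
rewrite big_split /=; congr (_ * _).
  rewrite -[RHS](prod_side _ i id) //; apply: eq_bigr => b _.
  by case: (inr (i, b) \in A); rewrite ?big_pred0_eq.
under eq_bigr do rewrite big_mkcond big_pairE /=.
by rewrite exchange_big /=; apply: eq_bigr => k _; rewrite -prod_arcs_between_parts.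
Qed.

Lemma colouring_poly_perm (z : 'I_t -> nat) (h : 'I_t -> 'I_t) : injective h ->
  colouring_poly (z \o h) = colouring_poly z.
Proof.
move=> h_inj; rewrite /colouring_poly; congr (_ * _).
  by apply: eq_bigr => j _; rewrite [in RHS](reindex_inj h_inj).
rewrite [RHS](reindex_inj h_inj); apply: eq_bigr => i _; congr (_ * _).
by rewrite [RHS](reindex_inj h_inj); apply: eq_bigr => k _; rewrite /between_parts (inj_eq h_inj).
Qed.

Definition grid_term (y : JV s t -> nat) : rat :=
  graph_poly ori (fun v => nat_rat (y v)) * \prod_v node_weight rat (list_size v) (y v).

Lemma grid_term_ext y y' : y =1 y' -> grid_term y = grid_term y'.
Proof.
move=> eq_y; rewrite /grid_term /graph_poly.
by congr (_ * _); apply: eq_bigr => ? _; rewrite !eq_y.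
Qed.

Lemma grid_term_colouring_perm (z : 'I_t -> nat) (h : 'I_t -> 'I_t) : injective h ->
  grid_term (colouring (z \o h)) = grid_term (colouring z).
Proof.
move=> h_inj; rewrite /grid_term !graph_poly_colouring colouring_poly_perm //; congr (_ * _).
rewrite !big_sumType !big_pairE /=; congr (_ * _).
have weight_part (c : nat) i :
    \prod_b node_weight rat (if inr (i, b) \in A then (s + t)%N else t) c =
    node_weight rat (s + t)%N c * node_weight rat t c.
  by rewrite big_bool !inr_in_A; case: (side i); rewrite //= mulrC.
under eq_bigr do rewrite weight_part.
by rewrite [RHS](reindex_inj h_inj); under [RHS]eq_bigr do rewrite weight_part.
Qed.

Definition avert (i : 'I_t) : JV s t := inr (i, side i).
Definition bvert (i : 'I_t) : JV s t := inr (i, ~~ side i).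

Lemma avert_in_A i : avert i \in A.
Proof. by rewrite inr_in_A. Qed.

Lemma bvert_notin_A i : bvert i \notin A.
Proof. by rewrite inr_in_A; case: (side i). Qed.

Lemma adj_bvert u i : u \in A -> u != avert i -> Jadj u (bvert i).
Proof.
case: u => [//|[k c]]; rewrite inr_in_A => /eqP -> /=.
by apply: contra_neq => ->.
Qed.

Section ProperColouring.
Variable y : JV s t -> nat.
Hypotheses (y_lt : forall v, (y v < list_size v)%N)
           (y_proper : forall u w, Jadj u w -> y u != y w).

Lemma colour_inj_A : {in A &, injective y}.
Proof.
move=> u w uA wA eq_y; case: (eqVneq u w) => // neq_uw.
by have := y_proper (cliqueA uA wA neq_uw); rewrite eq_y eqxx.
Qed.

Lemma colour_bvert i : y (bvert i) = y (avert i).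
Proof.
have y_lt_A : {in A, forall u, y u < #|A|}%N.
  by move=> u _; rewrite cardA; apply: leq_trans (y_lt u) _; case/andP: (list_size_bounds u).
have lt_b : (y (bvert i) < #|A|)%N.
  by apply: leq_trans (y_lt _) _; rewrite /= (negbTE (bvert_notin_A i)) cardA leq_addl.
have [u uA eq_u] := inj_bounded_onto colour_inj_A y_lt_A lt_b.
case: (eqVneq u (avert i)) => [<- //|neq_u].
by have := y_proper (adj_bvert uA neq_u); rewrite eq_u eqxx.
Qed.

Lemma colour_avert_lt i : (y (avert i) < t)%N.
Proof. by rewrite -colour_bvert; have := y_lt (bvert i); rewrite /= (negbTE (bvert_notin_A i)). Qed.

Definition part_colour (i : 'I_t) : 'I_t := Ordinal (colour_avert_lt i).

Lemma part_colour_inj : injective part_colour.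
Proof.
move=> i k /(congr1 val)/colour_inj_A.
by case/(_ (avert_in_A i) (avert_in_A k)).
Qed.

Lemma colour_inl_ge j : (t <= y (inl j))%N.
Proof.
rewrite leqNgt; apply/negP => lt_jt.
have /codomP[i /(congr1 val) /= eq_i] := injF_onto part_colour_inj (Ordinal lt_jt).
by have := @y_proper (inl j) (avert i) isT; rewrite eq_i eqxx.
Qed.

Lemma colour_inl j : y (inl j) = (t + j)%N.
Proof.
pose g k := (y (inl k) - t)%N.
have g_inj : injective g.
  move=> k k' eq_g; case: (eqVneq k k') => // neq_k.
  have eq_y : y (inl k) = y (inl k').
    by have := colour_inl_ge k; have := colour_inl_ge k'; rewrite /g in eq_g; lia.
  by have := @y_proper (inl k) (inl k') neq_k; rewrite eq_y eqxx.
have g_le k : (g k <= k)%N by have := y_lt (inl k); rewrite /g /=; lia.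
by have := ord_inj_bounded_id g_inj g_le j; have := colour_inl_ge j; rewrite /g; lia.
Qed.

Lemma proper_colouringE :
  exists2 z : 'I_t -> 'I_t, injective z & y =1 colouring (fun i => z i).
Proof.
exists part_colour; first exact: part_colour_inj.
case=> [j|[i b]] /=; first exact: colour_inl.
have [-> //|/negPf neq_b] := eqVneq b (side i).
by rewrite -colour_bvert /bvert; case: b (side i) neq_b => [] [].
Qed.

End ProperColouring.

Definition std_colouring : JV s t -> nat := colouring (@nat_of_ord t).

Lemma std_colouring_lt v : (std_colouring v < list_size v)%N.
Proof. by case: v => [j|[i b]] /=; [lia | case: (_ \in A); have := ltn_ord i; lia]. Qed.

Lemma std_colouring_proper u w : Jadj u w -> std_colouring u != std_colouring w.
Proof.
case: u w => [j|[i b]] [k|[l c]] //=.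
- by rewrite eqn_add2l.
- by have := ltn_ord l; lia.
- by have := ltn_ord i; lia.
Qed.

Lemma grid_term_std_neq0 : grid_term std_colouring != 0.
Proof.
rewrite mulf_neq0 //.
  by apply/(graph_poly_neq0P _ ori_orientation) => u w /std_colouring_proper; rewrite eqr_nat.
by apply/prodf_neq0 => v _; rewrite node_weight_eq0 -ltnNge std_colouring_lt.
Qed.

Lemma grid_term_neq0_std y : grid_term y != 0 -> grid_term y = grid_term std_colouring.
Proof.
rewrite mulf_eq0 negb_or => /andP[/(graph_poly_neq0P _ ori_orientation) y_proper /prodf_neq0 y_w].
have y_lt v : (y v < list_size v)%N by rewrite ltnNge -(node_weight_eq0 rat) y_w.
have y_proper' u w : Jadj u w -> y u != y w by move/y_proper; rewrite eqr_nat.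
have [z z_inj eq_y] := proper_colouringE y_lt y_proper'.
by rewrite (grid_term_ext eq_y); apply: grid_term_colouring_perm.
Qed.

Lemma grid_sum_neq0 : grid_sum rat ori (s + t)%N list_size != 0.
Proof.
have std_lt v : (std_colouring v < s + t)%N.
  by apply: leq_trans (std_colouring_lt v) _; case/andP: (list_size_bounds v).
pose y0 : {ffun JV s t -> 'I_(s + t)%N} := [ffun v => Ordinal (std_lt v)].
have grid_term_y0 : grid_term (fun v => y0 v) = grid_term std_colouring.
  by apply: grid_term_ext => v; rewrite ffunE.
change (\sum_(y : {ffun JV s t -> 'I_(s + t)%N}) grid_term (fun v => y v) != 0).
apply: (sum_neq0_const_support (i0 := y0)).
  by move=> y /grid_term_neq0_std ->.
by rewrite grid_term_y0 grid_term_std_neq0.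
Qed.

End Join.

Local Close Scope ring_scope.

Theorem mainTheorem4 (s t : nat) (ht : 1 <= t)
  (A : {set JV s t}) (hA : #|A| = s + t) (hcl : is_clique (@Jadj s t) A)
  (f : JV s t -> nat) (hpos : forall v, 0 < f v)
  (hfA : forall v, v \in A -> s + t <= f v)
  (hfB : forall v, v \notin A -> t <= f v) :
  is_fAT (@Jadj s t) f.
Proof.
apply: (is_fAT_grid_sum (ori_orientation A) (list_size_bounds A)
          (outdeg_ori hA hcl) _ (grid_sum_neq0 hA hcl)).
case=> [j|[i b]] /=.
- by apply: leq_trans (hfA _ (inl_in_A hA hcl j)); have := ltn_ord j; lia.
- by case: ifP => [/hfA|/negbT/hfB].
Qed.
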